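(* Let $\|\cdot\|$ be a norm on $\mathbb{R}^d$, $\rho\ge 0$, and $\eta\in[0,1)$. Define $$\mathcal{G}_{\mathsf{mean}}(\rho,\eta)=\Big\{p \;:\; \|\mathbb{E}_r[X]-\mathbb{E}_p[X]\|\le\rho \text{ for all } r\le \tfrac{p}{1-\eta}\Big\}.$$ Then for every $\epsilon$ with $2\epsilon\le\eta<1$, $$\sup_{p_1,p_2\in\mathcal{G}_{\mathsf{mean}}(\rho,\eta):\ \mathsf{TV}(p_1,p_2)\le 2\epsilon}\ \|\mathbb{E}_{p_1}[X]-\mathbb{E}_{p_2}[X]\|\le 2\rho .$$
   Context: All distributions are probability distributions on $\mathbb{R}^d$ (with finite means where used). For distributions $r,p$ and $\eta\in[0,1)$, the notation $r\le \frac{p}{1-\eta}$ means that $r$ is a probability distribution with $r(A)\le p(A)/(1-\eta)$ for every measurable set $A$ (i.e. $r$ is obtained from $p$ by deleting at most an $\eta$ fraction of mass and renormalizing). $\mathsf{TV}(p,q)=\sup_A |p(A)-q(A)|$ is the total variation distance. *)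

(* R^d is modelled as the measurable space
   d.-tuple R (product Borel sigma-algebra generated by the coordinates,
   the library's canonical instance); vectors (means) live in 'rV[R]_d. *)
From HB Require Import structures.
From mathcomp Require Import all_boot all_order all_algebra.
From mathcomp Require Import all_classical all_reals all_analysis.
Set Implicit Arguments. Unset Strict Implicit. Unset Printing Implicit Defensive.
Import Order.TTheory GRing.Theory Num.Theory.
Local Open Scope classical_set_scope.
Local Open Scope ring_scope.

Definition is_norm (R : realType) (d : nat) (N : 'rV[R]_d -> R) : Prop :=
  [/\ (forall x, N x = 0 -> x = 0),
      (forall (a : R) x, N (a *: x) = `|a| * N x) &
      (forall x y, N (x + y) <= N x + N y)].

Definition has_finite_mean (R : realType) (d : nat)
  (p : probability (d.-tuple R) R) : Prop :=
  forall i : 'I_d, p.-integrable setT (fun x => (tnth x i)%:E).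

Definition mean (R : realType) (d : nat) (p : probability (d.-tuple R) R)
  : 'rV[R]_d :=
  \row_(i < d) Rintegral p setT (fun x => tnth x i).

Definition deletion (R : realType) (d : nat)
  (r p : probability (d.-tuple R) R) (eta : R) : Prop :=
  forall A : set (d.-tuple R), measurable A ->
    (r A <= ((1 - eta)^-1)%:E * p A)%E.

Definition TV (R : realType) (d : nat) (p q : probability (d.-tuple R) R)
  : \bar R :=
  ereal_sup [set `|(p A - q A)%E|%E | A in [set A | measurable A]].

Definition G_mean (R : realType) (d : nat) (N : 'rV[R]_d -> R) (rho eta : R)
  (p : probability (d.-tuple R) R) : Prop :=
  has_finite_mean p /\
  forall r : probability (d.-tuple R) R, deletion r p eta ->
    N (mean r - mean p) <= rho.

From HB Require Import structures.
From mathcomp Require Import all_boot all_order all_algebra.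
From mathcomp Require Import all_classical all_reals all_analysis.
From mathcomp Require Import lra.
Set Implicit Arguments. Unset Strict Implicit. Unset Printing Implicit Defensive.
Import Order.TTheory GRing.Theory Num.Theory.
Local Open Scope classical_set_scope.
Local Open Scope ring_scope.

(* If TV(p1, p2) <= eta, the overlap min(p1, p2) has mass at least 1 - eta;
   normalised, it is a single distribution r with r <= p1/(1 - eta) and
   r <= p2/(1 - eta).  Both p1 and p2 lie in G_mean, so E_r is within rho of
   E_p1 and of E_p2, and the triangle inequality gives 2 rho.  The overlap is
   built from a Hahn decomposition (P, Q) of p1 - p2 as p2 on P plus p1 on Q. *)

Section overlap.
Local Open Scope ereal_scope.
Context dT (T : measurableType dT) (R : realType) (p1 p2 : probability T R).

Definition charge_diff : {charge set T -> \bar R} :=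
  cadd (charge_of_finite_measure p1) (copp (charge_of_finite_measure p2)).

Lemma charge_diffE A : charge_diff A = p1 A - p2 A.
Proof. by []. Qed.

Variables (P Q : set T) (mP : measurable P) (mQ : measurable Q).
Hypothesis hahn : hahn_decomposition charge_diff P Q.

Lemma measure_hahn_split (mu : {measure set T -> \bar R}) A : measurable A ->
  mu A = mu (A `&` P) + mu (A `&` Q).
Proof.
case: hahn => _ _ PQT PQ0 mA.
rewrite -measureU; [|exact: measurableI..|].
  by rewrite -setIUr PQT setIT.
by rewrite setIACA PQ0 setI0.
Qed.

Lemma hahn_pos_le A : measurable A -> p2 (A `&` P) <= p1 (A `&` P).
Proof.
case: hahn => -[_ Ppos] _ _ _ mA.
have := Ppos _ (measurableI _ _ mA mP) (@subIsetr _ _ _).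
rewrite charge_diffE sube_ge0 // fin_num_measure //; exact: measurableI.
Qed.

Lemma hahn_neg_le A : measurable A -> p1 (A `&` Q) <= p2 (A `&` Q).
Proof.
case: hahn => _ -[_ Qneg] _ _ mA.
have := Qneg _ (measurableI _ _ mA mQ) (@subIsetr _ _ _).
rewrite charge_diffE sube_le0 // fin_num_measure //; exact: measurableI.
Qed.

Definition overlap : {measure set T -> \bar R} :=
  measure_add (mrestr p2 mP) (mrestr p1 mQ).

Lemma overlapE A : overlap A = p2 (A `&` P) + p1 (A `&` Q).
Proof. exact: measure_addE. Qed.

Lemma overlap_le1 A : measurable A -> overlap A <= p1 A.
Proof.
by move=> mA; rewrite overlapE (measure_hahn_split p1 mA) leeD2r ?hahn_pos_le.
Qed.

Lemma overlap_le2 A : measurable A -> overlap A <= p2 A.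
Proof.
by move=> mA; rewrite overlapE (measure_hahn_split p2 mA) leeD2l ?hahn_neg_le.
Qed.

Lemma overlap_setT_ge (e : R) :
  p1 P - p2 P <= e%:E -> (1 - e)%:E <= overlap setT.
Proof.
have : p1 setT = p1 P + p1 Q.
  by rewrite (measure_hahn_split p1 measurableT) !setTI.
rewrite overlapE probability_setT !setTI.
rewrite -[p1 P]fineK ?fin_num_measure // -[p2 P]fineK ?fin_num_measure //.
rewrite -[p1 Q]fineK ?fin_num_measure // -EFinB -!EFinD => -[p1_split].
rewrite !lee_fin; lra.
Qed.

End overlap.

Lemma mnormalize_le dT (T : measurableType dT) (R : realType)
    (mu nu : {measure set T -> \bar R}) (pr : probability T R) (c : R) A :
  0 < c -> (c%:E <= mu setT)%E -> mu setT \is a fin_num -> (mu A <= nu A)%E ->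
  (mnormalize mu pr A <= (c^-1)%:E * nu A)%E.
Proof.
move=> c0 + /fineK muT munu; rewrite -muT lee_fin => cm.
have m0 : 0 < fine (mu setT) by exact: lt_le_trans cm.
rewrite /mnormalize -muT eqe gt_eqF //= muleC.
have m1 : (0 <= ((fine (mu setT))^-1)%:E)%E by rewrite lee_fin invr_ge0 ltW.
apply: (le_trans (lee_wpmul2l m1 munu)).
by rewrite lee_wpmul2r ?measure_ge0 // lee_fin lef_pV2 ?posrE.
Qed.

Lemma is_norm_opp (R : realType) (d : nat) (N : 'rV[R]_d -> R) x :
  is_norm N -> N (- x) = N x.
Proof. by case=> _ Nscale _; rewrite -scaleN1r Nscale normrN1 mul1r. Qed.

Lemma is_norm_sub_le (R : realType) (d : nat) (N : 'rV[R]_d -> R) x y z :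
  is_norm N -> N (x - y) <= N (z - x) + N (z - y).
Proof.
move=> Nnorm; have [_ _ Ntri] := Nnorm.
rewrite -(is_norm_opp (z - x) Nnorm) opprB.
have -> : x - y = (x - z) + (z - y) by rewrite addrA subrK.
exact: Ntri.
Qed.

Lemma sub_le_TV (R : realType) (d : nat) (p q : probability (d.-tuple R) R) A :
  measurable A -> (p A - q A <= TV p q)%E.
Proof.
by move=> mA; apply: le_trans (lee_abs _) _; apply: ereal_sup_ubound; exists A.
Qed.

Lemma TV_le_common_deletion (R : realType) (d : nat)
    (p1 p2 : probability (d.-tuple R) R) (eta : R) :
  eta < 1 -> (TV p1 p2 <= eta%:E)%E ->
  exists r, deletion r p1 eta /\ deletion r p2 eta.
Proof.
move=> eta1 TVle; have [P [Q hahn]] := Hahn_decomposition (charge_diff p1 p2).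
have [[mP _] [mQ _] _ _] := hahn.
have mass := overlap_setT_ge mP mQ hahn (le_trans (sub_le_TV p1 p2 mP) TVle).
have mass_fin : overlap p1 p2 mP mQ setT \is a fin_num.
  rewrite ge0_fin_numE ?measure_ge0 //.
  apply: le_lt_trans (overlap_le1 mP mQ hahn measurableT) _.
  by rewrite probability_setT ltey.
have eta1_gt0 : 0 < 1 - eta by rewrite subr_gt0.
exists (mnormalize (overlap p1 p2 mP mQ) p1).
split=> A mA; apply: mnormalize_le => //.
  exact: overlap_le1.
exact: overlap_le2.
Qed.

Theorem lemma3p1 (R : realType) (d : nat) (N : 'rV[R]_d -> R)
  (rho eta eps : R) :
  is_norm N -> 0 <= rho -> 0 <= eta -> eta < 1 -> 2 * eps <= eta ->
  forall p1 p2 : probability (d.-tuple R) R,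
    G_mean N rho eta p1 -> G_mean N rho eta p2 ->
    (TV p1 p2 <= (2 * eps)%:E)%E ->
    N (mean p1 - mean p2) <= 2 * rho.
Proof.
move=> Nnorm _ _ eta1 epseta p1 p2 [_ G1] [_ G2] TVle.
have [r [r1 r2]] : exists r, deletion r p1 eta /\ deletion r p2 eta.
  by apply: TV_le_common_deletion; rewrite // (le_trans TVle) ?lee_fin.
rewrite mulr_natl mulr2n; apply: le_trans (is_norm_sub_le _ _ (mean r) Nnorm) _.
by apply: lerD; [exact: G1|exact: G2].
Qed.
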